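(* Let $\xi=\xi_{\{\mu\}}$ be a GCKV on $\mathbb{E}^2$, not identically zero, with parameters $\mu=(\mu_0,\mu_1,\mu_2)$ in the coordinates $\{z,\bar z\}$. Let $U\subset\mathbb{R}^4\setminus\{0\}$ be the set of $u$ such that $\xi$ is a Killing vector of the metric $g_u$. Then: - If $2\mu_0\mu_2-\mu_1^2\notin\mathbb{R}$, then $U=\emptyset$. - If $2\mu_0\mu_2-\mu_1^2\in\mathbb{R}$, let $\gamma,\delta\in\mathbb{C}$ be any pair with $\frac12\delta^2\mu_2-\gamma\delta\mu_1+\gamma^2\mu_0=1$, set $\alpha=\frac12(\delta\mu_2-\gamma\mu_1)$, $\beta=\frac12\delta\mu_1-\gamma\mu_0$ and $\mathbb{A}=\begin{pmatrix}\alpha&\beta\\ \gamma&\delta\end{pmatrix}$. Then $u\in U$ if and only if $$(u_0,u_1,u_2,u_3)^T=\mathcal{O}(\mathbb{A})^T\Big(s_1\big(\tfrac14(2\mu_0\mu_2-\mu_1^2)+1\big),\ s_1\big(\tfrac14(2\mu_0\mu_2-\mu_1^2)-1\big),\ 0,\ s_2\Big)^T$$ for some $(s_1,s_2)\in\mathbb{R}^2\setminus\{0\}$. Moreover, such $g_u$ has constant Gauss curvature $s_1^2(2\mu_0\mu_2-\mu_1^2)-s_2^2$.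
   Context: $\mathbb{E}^2$ has Cartesian coordinates $\{x,y\}$, $z=\frac12(x-iy)$. A GCKV with parameters $\mu\in\mathbb{C}^3$ is $\xi_{\{\mu\}}=(\mu_0+\mu_1z+\frac12\mu_2z^2)\partial_z+(\bar\mu_0+\bar\mu_1\bar z+\frac12\bar\mu_2\bar z^2)\partial_{\bar z}$. For $u=(u_0,u_1,u_2,u_3)\in\mathbb{R}^4\setminus\{0\}$, $g_u:=\Omega_u^{-2}(dx^2+dy^2)$ with $\Omega_u=u_0+u_1+u_2x+u_3y+\frac14(u_0-u_1)(x^2+y^2)$ (on the set where $\Omega_u\ne0$). For $\mathbb{A}\in SL(2,\mathbb{C})$, $\mathcal{O}(\mathbb{A})=\frac12M$ where the rows of $M$ are: row 0: $\big(\alpha\bar\alpha+\beta\bar\beta+\gamma\bar\gamma+\delta\bar\delta,\ -\alpha\bar\alpha+\beta\bar\beta-\gamma\bar\gamma+\delta\bar\delta,\ \alpha\bar\beta+\beta\bar\alpha+\gamma\bar\delta+\delta\bar\gamma,\ i(-\alpha\bar\beta+\beta\bar\alpha-\gamma\bar\delta+\delta\bar\gamma)\big)$; row 1: $\big(-\alpha\bar\alpha-\beta\bar\beta+\gamma\bar\gamma+\delta\bar\delta,\ \alpha\bar\alpha-\beta\bar\beta-\gamma\bar\gamma+\delta\bar\delta,\ -\alpha\bar\beta-\beta\bar\alpha+\gamma\bar\delta+\delta\bar\gamma,\ i(\alpha\bar\beta-\beta\bar\alpha-\gamma\bar\delta+\delta\bar\gamma)\big)$; row 2: $\big(\alpha\bar\gamma+\beta\bar\delta+\gamma\bar\alpha+\delta\bar\beta,\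 -\alpha\bar\gamma+\beta\bar\delta-\gamma\bar\alpha+\delta\bar\beta,\ \alpha\bar\delta+\beta\bar\gamma+\gamma\bar\beta+\delta\bar\alpha,\ i(-\alpha\bar\delta+\beta\bar\gamma-\gamma\bar\beta+\delta\bar\alpha)\big)$; row 3: $\big(i(\alpha\bar\gamma+\beta\bar\delta-\gamma\bar\alpha-\delta\bar\beta),\ i(-\alpha\bar\gamma+\beta\bar\delta+\gamma\bar\alpha-\delta\bar\beta),\ i(\alpha\bar\delta+\beta\bar\gamma-\gamma\bar\beta-\delta\bar\alpha),\ \alpha\bar\delta-\beta\bar\gamma-\gamma\bar\beta+\delta\bar\alpha\big)$. *)

From Stdlib Require Import Reals.
From Coquelicot Require Import Coquelicot.
Open Scope R_scope.

Definition d_x (f : R -> R -> R) (x y : R) : R := Derive (fun t => f t y) x.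
Definition d_y (f : R -> R -> R) (x y : R) : R := Derive (fun t => f x t) y.
Definition pd (k : nat) (f : R -> R -> R) : R -> R -> R :=
  match k with O => d_x f | _ => d_y f end.

(** A vector field on (an open subset of) E^2: its components X 0 = X^x, X 1 = X^y. *)
Definition vfield := nat -> R -> R -> R.
Definition metric := nat -> nat -> R -> R -> R.

Definition lie_metric (X : vfield) (g : metric) (i j : nat) (x y : R) : R :=
  let term k := X k x y * pd k (g i j) x y
                + g k j x y * pd i (X k) x y
                + g i k x y * pd j (X k) x y in
  term 0%nat + term 1%nat.

Definition is_killing (X : vfield) (g : metric) (D : R -> R -> Prop) : Prop :=
  forall x y, D x y -> forall i j : nat, (i < 2)%nat -> (j < 2)%nat ->
    lie_metric X g i j x y = 0.

(** Gauss curvature of g = E dx^2 + 2F dx dy + G dy^2 (Brioschi formula). *)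
Definition gauss_curvature (g : metric) (x y : R) : R :=
  let E := g 0%nat 0%nat in let F := g 0%nat 1%nat in let G := g 1%nat 1%nat in
  let Eu := d_x E x y in let Ev := d_y E x y in
  let Fu := d_x F x y in let Fv := d_y F x y in
  let Gu := d_x G x y in let Gv := d_y G x y in
  let Evv := d_y (d_y E) x y in let Fuv := d_y (d_x F) x y in
  let Guu := d_x (d_x G) x y in
  let e := E x y in let f := F x y in let gg := G x y in
  let det3 a11 a12 a13 a21 a22 a23 a31 a32 a33 :=
    a11 * (a22 * a33 - a23 * a32) - a12 * (a21 * a33 - a23 * a31)
    + a13 * (a21 * a32 - a22 * a31) in
  (det3 (- Evv / 2 + Fuv - Guu / 2) (Eu / 2) (Fu - Ev / 2)
        (Fv - Gu / 2) e f
        (Gv / 2) f gg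
   - det3 0 (Ev / 2) (Gu / 2)
          (Ev / 2) e f
          (Gu / 2) f gg) / (e * gg - f * f) ^ 2.

Definition conf_metric (lam : R -> R -> R) : metric :=
  fun i j x y => if Nat.eqb i j then lam x y else 0.

Definition Omega (u0 u1 u2 u3 : R) (x y : R) : R :=
  u0 + u1 + u2 * x + u3 * y + / 4 * (u0 - u1) * (x ^ 2 + y ^ 2).
Definition g_u (u0 u1 u2 u3 : R) : metric :=
  conf_metric (fun x y => / (Omega u0 u1 u2 u3 x y) ^ 2).
Definition dom_u (u0 u1 u2 u3 : R) : R -> R -> Prop :=
  fun x y => Omega u0 u1 u2 u3 x y <> 0.

Definition zc (x y : R) : C := (x / 2, - y / 2)%R.

(** GCKV xi_{mu} = f(z) d_z + conj(f(z)) d_zbar, f(z) = mu0 + mu1 z + mu2 z^2/2.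
    Since x = z + zbar, y = i (z - zbar), d_z = d_x + i d_y and d_zbar = d_x - i d_y,
    so xi = 2 Re f d_x - 2 Im f d_y; these are its real Cartesian components. *)
Definition gckv_f (mu0 mu1 mu2 : C) (x y : R) : C :=
  (mu0 + mu1 * zc x y + / 2 * mu2 * (zc x y * zc x y))%C.
Definition gckv (mu0 mu1 mu2 : C) : vfield :=
  fun k x y => match k with
               | O => 2 * Re (gckv_f mu0 mu1 mu2 x y)
               | _ => - 2 * Im (gckv_f mu0 mu1 mu2 x y)
               end.

Definition OA (a b c d : C) (i j : nat) : C :=
  let cj := Cconj in
  (/ 2 * match i, j with
  | 0, 0 => a * cj a + b * cj b + c * cj c + d * cj d
  | 0, 1 => - (a * cj a) + b * cj b - c * cj c + d * cj d
  | 0, 2 => a * cj b + b * cj a + c * cj d + d * cj c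
  | 0, 3 => Ci * (- (a * cj b) + b * cj a - c * cj d + d * cj c)
  | 1, 0 => - (a * cj a) - b * cj b + c * cj c + d * cj d
  | 1, 1 => a * cj a - b * cj b - c * cj c + d * cj d
  | 1, 2 => - (a * cj b) - b * cj a + c * cj d + d * cj c
  | 1, 3 => Ci * (a * cj b - b * cj a - c * cj d + d * cj c)
  | 2, 0 => a * cj c + b * cj d + c * cj a + d * cj b
  | 2, 1 => - (a * cj c) + b * cj d - c * cj a + d * cj b
  | 2, 2 => a * cj d + b * cj c + c * cj b + d * cj a
  | 2, 3 => Ci * (- (a * cj d) + b * cj c - c * cj b + d * cj a)
  | 3, 0 => Ci * (a * cj c + b * cj d - c * cj a - d * cj b)
  | 3, 1 => Ci * (- (a * cj c) + b * cj d + c * cj a - d * cj b)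
  | 3, 2 => Ci * (a * cj d + b * cj c - c * cj b - d * cj a)
  | 3, 3 => a * cj d - b * cj c - c * cj b + d * cj a
  | _, _ => 0
  end)%C.

Definition OAT_apply (a b c d : C) (v : nat -> C) (i : nat) : C :=
  (OA a b c d 0 i * v 0%nat + OA a b c d 1 i * v 1%nat
   + OA a b c d 2 i * v 2%nat + OA a b c d 3 i * v 3%nat)%C.

(* The Killing equation L_xi g_u = 0 says that the polynomial xi(Omega_u) - (1/2)(div xi) Omega_u
   vanishes on the open set where Omega_u <> 0.  That polynomial has the same shape as Omega_u, so
   it is Omega_k for a vector k = K_mu u depending linearly on u, and the Killing condition is
   K_mu u = 0.  The rotated field i xi gives K_(i mu) (K_mu u) = (Im q / 2) u, so K_mu is
   injective when q is not real.  When q is real, the binary quadratic form of xi is F_mu = F_nu o A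
   with F_nu(s,t) = s^2 + (q/4) t^2; the Killing condition is equivariant,
   K_(A.nu) (O(A)^T w) = O(A)^T K_((det A) nu) w, and the kernel of K_nu consists of the vectors
   (s1 (q/4 + 1), s1 (q/4 - 1), 0, s2).  Finally g_u has constant curvature
   u0^2 - u1^2 - u2^2 - u3^2, a Lorentz form that O(A) multiplies by |det A|^2. *)

From Stdlib Require Import Reals Lra Lia.
From Coquelicot Require Import Coquelicot.
Open Scope R_scope.

Record vec4 := V4 { v0 : R; v1 : R; v2 : R; v3 : R }.

Definition vzero : vec4 := V4 0 0 0 0.
Definition vscale (r : R) (w : vec4) : vec4 := V4 (r * v0 w) (r * v1 w) (r * v2 w) (r * v3 w).
Definition lorentz_sq (w : vec4) : R := v0 w ^ 2 - v1 w ^ 2 - v2 w ^ 2 - v3 w ^ 2.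

Record cparam := CP { m0 : C; m1 : C; m2 : C }.

Definition pscale (z : C) (m : cparam) : cparam := CP (z * m0 m) (z * m1 m) (z * m2 m).
Definition disc (m : cparam) : C := (2 * m0 m * m2 m - m1 m * m1 m)%C.

(* Om (killing_vec m u) is the polynomial xi(Omega_u) - (1/2) (div xi) Omega_u,
   where xi is the GCKV with parameters m. *)
Definition killing_vec (m : cparam) (u : vec4) : vec4 :=
  let a0 := Re (m0 m) in let b0 := Im (m0 m) in
  let a1 := Re (m1 m) in let b1 := Im (m1 m) in
  let a2 := Re (m2 m) in let b2 := Im (m2 m) in
  V4 (a0 * v2 u - a1 * v1 u - b0 * v3 u - / 2 * (a2 * v2 u + b2 * v3 u))
     (a0 * v2 u - a1 * v0 u - b0 * v3 u + / 2 * (a2 * v2 u + b2 * v3 u))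
     (a0 * (v0 u - v1 u) - / 2 * a2 * (v0 u + v1 u) - b1 * v3 u)
     (- b0 * (v0 u - v1 u) + b1 * v2 u - / 2 * b2 * (v0 u + v1 u)).

Definition Om (u : vec4) : R -> R -> R := Omega (v0 u) (v1 u) (v2 u) (v3 u).
Definition conf_factor (u : vec4) (x y : R) : R := / Om u x y ^ 2.
Definition xi (m : cparam) : vfield := gckv (m0 m) (m1 m) (m2 m).

(** * Polynomials vanishing on open sets *)

Lemma quadratic_eq0_locally a b c x :
  locally x (fun t => a * t ^ 2 + b * t + c = 0) -> a = 0 /\ b = 0 /\ c = 0.
Proof.
  intros [[eps Heps] He]; cbn in He.
  set (d := eps / 2).
  assert (Hball : forall h, Rabs h < eps -> a * (x + h) ^ 2 + b * (x + h) + c = 0).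
  { intros h Hh. apply He. change (Rabs (x + h - x) < eps).
    now replace (x + h - x) with h by ring. }
  assert (H0 := Hball 0 ltac:(rewrite Rabs_R0; lra)).
  assert (Hp := Hball d ltac:(unfold d; rewrite Rabs_pos_eq; lra)).
  assert (Hm := Hball (- d) ltac:(unfold d; rewrite Rabs_Ropp, Rabs_pos_eq; lra)).
  assert (Hd : d <> 0) by (unfold d; lra).
  assert (Ha : a * d ^ 2 = 0) by lra.
  assert (a = 0) by (apply Rmult_integral in Ha as [|Ha]; [easy | now apply pow_nonzero in Ha]).
  subst a.
  assert (Hb : b * d = 0) by lra.
  assert (b = 0) by (apply Rmult_integral in Hb as [|]; [easy | contradiction]).
  subst b. lra.
Qed.

Lemma locally_nonzero (f : R -> R) x :
  continuity_pt f x -> f x <> 0 -> locally x (fun t => f t <> 0).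
Proof.
  intros Hc Hf. destruct (continuous_neq_0 f x Hc Hf) as [eps He].
  exists eps. intros t Ht. replace t with (x + (t - x)) by ring. now apply He.
Qed.

Lemma Om_nonzero_locally_x u x y : Om u x y <> 0 -> locally x (fun t => Om u t y <> 0).
Proof. apply (locally_nonzero (fun t => Om u t y)). unfold Om, Omega. reg. Qed.

Lemma Om_nonzero_locally_y u x y : Om u x y <> 0 -> locally y (fun t => Om u x t <> 0).
Proof. apply (locally_nonzero (fun t => Om u x t)). unfold Om, Omega. reg. Qed.

Lemma Om_nonzero_somewhere u : u <> vzero -> exists x y, Om u x y <> 0.
Proof.
  intro Hu.
  destruct (Req_dec (Om u 0 0) 0) as [H00|]; [|eauto].
  destruct (Req_dec (Om u 1 0) 0) as [H10|]; [|eauto].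
  destruct (Req_dec (Om u (-1) 0) 0) as [Hm10|]; [|eauto].
  destruct (Req_dec (Om u 0 1) 0) as [H01|]; [|eauto].
  exfalso; apply Hu. destruct u as [u0 u1 u2 u3]; unfold Om, Omega in *; cbn in *.
  unfold vzero; f_equal; lra.
Qed.

Lemma Om_eq0_on_support u w :
  u <> vzero -> (forall x y, Om u x y <> 0 -> Om w x y = 0) -> w = vzero.
Proof.
  intros Hu Hw.
  destruct (Om_nonzero_somewhere u Hu) as (px & py & Hp).
  destruct w as [w0 w1 w2 w3].
  assert (Hx : locally px (fun t => / 4 * (w0 - w1) * t ^ 2 + w2 * t
                                   + (w0 + w1 + w3 * py + / 4 * (w0 - w1) * py ^ 2) = 0)).
  { apply (filter_imp (fun t => Om u t py <> 0)); [|now apply Om_nonzero_locally_x].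
    intros t Ht. rewrite <- (Hw t py Ht). unfold Om, Omega; cbn. ring. }
  assert (Hy : locally py (fun t => / 4 * (w0 - w1) * t ^ 2 + w3 * t
                                   + (w0 + w1 + w2 * px + / 4 * (w0 - w1) * px ^ 2) = 0)).
  { apply (filter_imp (fun t => Om u px t <> 0)); [|now apply Om_nonzero_locally_y].
    intros t Ht. rewrite <- (Hw px t Ht). unfold Om, Omega; cbn. ring. }
  apply quadratic_eq0_locally in Hx as (Ha & Hb & Hc).
  apply quadratic_eq0_locally in Hy as (_ & Hb' & _).
  subst w2 w3. unfold vzero. f_equal; nra.
Qed.

(** * Conformally flat metrics *)

Lemma conf_metric_diag lam i : conf_metric lam i i = lam.
Proof. unfold conf_metric. now rewrite Nat.eqb_refl. Qed.

Lemma conf_metric_offdiag lam i j : i <> j -> conf_metric lam i j = fun _ _ => 0.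
Proof. intro Hij. unfold conf_metric. now apply Nat.eqb_neq in Hij as ->. Qed.

Lemma d_x_0 x y : d_x (fun _ _ => 0) x y = 0.
Proof. exact (Derive_const 0 x). Qed.

Lemma d_y_0 x y : d_y (fun _ _ => 0) x y = 0.
Proof. exact (Derive_const 0 y). Qed.

Lemma lie_conf_metric_diag (X : vfield) lam i x y : (i < 2)%nat ->
  lie_metric X (conf_metric lam) i i x y
  = X 0%nat x y * d_x lam x y + X 1%nat x y * d_y lam x y
    + 2 * lam x y * pd i (X i) x y.
Proof.
  intro Hi. unfold lie_metric.
  destruct i as [|[|i]]; [| |lia];
    rewrite !conf_metric_diag, ?(conf_metric_offdiag lam 0 1), ?(conf_metric_offdiag lam 1 0)
      by discriminate; cbn [pd]; ring.
Qed.

Lemma lie_conf_metric_offdiag (X : vfield) lam i j x y : (i < 2)%nat -> (j < 2)%nat -> i <> j ->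
  lie_metric X (conf_metric lam) i j x y
  = lam x y * (d_y (X 0%nat) x y + d_x (X 1%nat) x y).
Proof.
  intros Hi Hj Hij. unfold lie_metric.
  destruct i as [|[|i]], j as [|[|j]]; try lia;
    rewrite !conf_metric_diag, ?(conf_metric_offdiag lam 0 1), ?(conf_metric_offdiag lam 1 0)
      by discriminate; cbn [pd]; rewrite ?d_x_0, ?d_y_0; ring.
Qed.

Lemma gauss_curvature_conf_metric lam x y : lam x y <> 0 ->
  gauss_curvature (conf_metric lam) x y
  = (d_x lam x y ^ 2 + d_y lam x y ^ 2
     - lam x y * (d_x (d_x lam) x y + d_y (d_y lam) x y)) / (2 * lam x y ^ 3).
Proof.
  intro Hl. unfold gauss_curvature; cbv zeta.
  rewrite !conf_metric_diag, (conf_metric_offdiag lam 0 1) by discriminate.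
  assert (Hxy0 : d_y (d_x (fun _ _ => 0)) x y = 0)
    by exact (Derive_const (Derive (fun _ => 0) x) y).
  rewrite !d_x_0, !d_y_0, Hxy0. field. exact Hl.
Qed.

Ltac solve_Om_neq0 H :=
  repeat split; repeat apply Rmult_integral_contrapositive_currified;
  try apply R1_neq_R0; intro; apply H; simpl in *; lra.

Definition dOm_x (u : vec4) (x : R) : R := v2 u + / 2 * (v0 u - v1 u) * x.
Definition dOm_y (u : vec4) (y : R) : R := v3 u + / 2 * (v0 u - v1 u) * y.

Lemma d_x_conf_factor u x y : Om u x y <> 0 ->
  d_x (conf_factor u) x y = -2 * dOm_x u x / Om u x y ^ 3.
Proof.
  intro H. apply is_derive_unique. unfold conf_factor, dOm_x, Om, Omega in *.
  auto_derive; [solve_Om_neq0 H | field; solve_Om_neq0 H].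
Qed.

Lemma d_y_conf_factor u x y : Om u x y <> 0 ->
  d_y (conf_factor u) x y = -2 * dOm_y u y / Om u x y ^ 3.
Proof.
  intro H. apply is_derive_unique. unfold conf_factor, dOm_y, Om, Omega in *.
  auto_derive; [solve_Om_neq0 H | field; solve_Om_neq0 H].
Qed.

Lemma d_xx_conf_factor u x y : Om u x y <> 0 ->
  d_x (d_x (conf_factor u)) x y
  = ((v1 u - v0 u) * Om u x y + 6 * dOm_x u x ^ 2) / Om u x y ^ 4.
Proof.
  intro H. unfold d_x at 1.
  rewrite (Derive_ext_loc _ (fun t => -2 * dOm_x u t / Om u t y ^ 3)).
  2: { apply (filter_imp (fun t => Om u t y <> 0)); [|now apply Om_nonzero_locally_x].
       intros t Ht. now apply d_x_conf_factor. }
  apply is_derive_unique. unfold dOm_x, Om, Omega in *.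
  auto_derive; [solve_Om_neq0 H | field; solve_Om_neq0 H].
Qed.

Lemma d_yy_conf_factor u x y : Om u x y <> 0 ->
  d_y (d_y (conf_factor u)) x y
  = ((v1 u - v0 u) * Om u x y + 6 * dOm_y u y ^ 2) / Om u x y ^ 4.
Proof.
  intro H. unfold d_y at 1.
  rewrite (Derive_ext_loc _ (fun t => -2 * dOm_y u t / Om u x t ^ 3)).
  2: { apply (filter_imp (fun t => Om u x t <> 0)); [|now apply Om_nonzero_locally_y].
       intros t Ht. now apply d_y_conf_factor. }
  apply is_derive_unique. unfold dOm_y, Om, Omega in *.
  auto_derive; [solve_Om_neq0 H | field; solve_Om_neq0 H].
Qed.

Lemma gauss_curvature_g_u u x y : Om u x y <> 0 ->
  gauss_curvature (conf_metric (conf_factor u)) x y = lorentz_sq u.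
Proof.
  intro H.
  rewrite gauss_curvature_conf_metric
    by (apply Rinv_neq_0_compat, pow_nonzero, H).
  rewrite d_x_conf_factor, d_y_conf_factor, d_xx_conf_factor, d_yy_conf_factor by exact H.
  unfold conf_factor, lorentz_sq, dOm_x, dOm_y, Om, Omega in *. field. solve_Om_neq0 H.
Qed.

(** * The Killing equation for a GCKV and g_u *)

Lemma xi_0 m x y : xi m 0%nat x y
  = 2 * Re (m0 m) + Re (m1 m) * x + Im (m1 m) * y
    + Re (m2 m) * (x ^ 2 - y ^ 2) / 4 + Im (m2 m) * x * y / 2.
Proof. destruct m as [[] [] []]. unfold xi, gckv, gckv_f, zc. simpl. field. Qed.

Lemma xi_1 m x y : xi m 1%nat x y
  = - 2 * Im (m0 m) - Im (m1 m) * x + Re (m1 m) * y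
    - Im (m2 m) * (x ^ 2 - y ^ 2) / 4 + Re (m2 m) * x * y / 2.
Proof. destruct m as [[] [] []]. unfold xi, gckv, gckv_f, zc. simpl. field. Qed.

Ltac derive_poly comp :=
  apply is_derive_unique; eapply is_derive_ext;
  [intro; symmetry; apply comp | auto_derive; [exact I | field]].

Definition xi_half_div (m : cparam) (x y : R) : R :=
  Re (m1 m) + Re (m2 m) * x / 2 + Im (m2 m) * y / 2.

Lemma pd_xi_diag m i x y : (i < 2)%nat -> pd i (xi m i) x y = xi_half_div m x y.
Proof.
  intro Hi. unfold xi_half_div.
  destruct i as [|[|i]]; [derive_poly xi_0 | derive_poly xi_1 | lia].
Qed.

Lemma xi_cauchy_riemann m x y : d_y (xi m 0%nat) x y + d_x (xi m 1%nat) x y = 0.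
Proof.
  replace (d_y (xi m 0%nat) x y) with (Im (m1 m) - Re (m2 m) * y / 2 + Im (m2 m) * x / 2)
    by (symmetry; derive_poly xi_0).
  replace (d_x (xi m 1%nat) x y) with (- Im (m1 m) - Im (m2 m) * x / 2 + Re (m2 m) * y / 2)
    by (symmetry; derive_poly xi_1).
  ring.
Qed.

Lemma lie_xi_conf_factor_diag m u i x y : (i < 2)%nat -> Om u x y <> 0 ->
  lie_metric (xi m) (conf_metric (conf_factor u)) i i x y
  = -2 * Om (killing_vec m u) x y / Om u x y ^ 3.
Proof.
  intros Hi H.
  rewrite lie_conf_metric_diag, pd_xi_diag by exact Hi.
  rewrite d_x_conf_factor, d_y_conf_factor, xi_0, xi_1 by exact H.
  unfold conf_factor, killing_vec, xi_half_div, dOm_x, dOm_y, Om, Omega in *; cbn.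
  field. solve_Om_neq0 H.
Qed.

Lemma lie_xi_conf_metric_offdiag m lam i j x y : (i < 2)%nat -> (j < 2)%nat -> i <> j ->
  lie_metric (xi m) (conf_metric lam) i j x y = 0.
Proof.
  intros Hi Hj Hij. rewrite lie_conf_metric_offdiag, xi_cauchy_riemann by assumption. ring.
Qed.

Lemma is_killing_xi_g_u m u : u <> vzero ->
  is_killing (xi m) (conf_metric (conf_factor u)) (fun x y => Om u x y <> 0)
  <-> killing_vec m u = vzero.
Proof.
  intro Hu. split.
  - intro HK. apply (Om_eq0_on_support u _ Hu). intros x y Hxy.
    specialize (HK x y Hxy 0%nat 0%nat ltac:(lia) ltac:(lia)).
    rewrite lie_xi_conf_factor_diag in HK by (lia || exact Hxy).
    assert (Hxy3 : Om u x y ^ 3 <> 0) by now apply pow_nonzero.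
    apply Rmult_integral in HK as [HK|HK]; [lra|].
    now apply Rinv_neq_0_compat in Hxy3.
  - intros Hk x y Hxy i j Hi Hj.
    destruct (Nat.eq_dec i j) as [<-|Hij].
    + rewrite lie_xi_conf_factor_diag, Hk by assumption.
      replace (Om vzero x y) with 0 by (unfold Om, Omega; cbn; ring).
      unfold Rdiv; ring.
    + now apply lie_xi_conf_metric_offdiag.
Qed.

Lemma is_killing_gckv_g_u mu0 mu1 mu2 u0 u1 u2 u3 :
  ~ (u0 = 0 /\ u1 = 0 /\ u2 = 0 /\ u3 = 0) ->
  is_killing (gckv mu0 mu1 mu2) (g_u u0 u1 u2 u3) (dom_u u0 u1 u2 u3)
  <-> killing_vec (CP mu0 mu1 mu2) (V4 u0 u1 u2 u3) = vzero.
Proof.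
  intro Hu. apply (is_killing_xi_g_u (CP mu0 mu1 mu2) (V4 u0 u1 u2 u3)).
  intro H. apply Hu. injection H as -> -> -> ->. now repeat split.
Qed.

(** * Moebius equivariance *)

Record cmat2 := CM { ma : C; mb : C; mc : C; md : C }.

Definition mdet (A : cmat2) : C := (ma A * md A - mb A * mc A)%C.
Definition madj (A : cmat2) : cmat2 := CM (md A) (- mb A) (- mc A) (ma A).

Definition to_cvec (w : vec4) (j : nat) : C :=
  match j with 0 => RtoC (v0 w) | 1 => RtoC (v1 w) | 2 => RtoC (v2 w) | _ => RtoC (v3 w) end.

(* O(A)^T w, whose entries are real by OAT_apply_real. *)
Definition oa (A : cmat2) (w : vec4) : vec4 :=
  let f i := Re (OAT_apply (ma A) (mb A) (mc A) (md A) (to_cvec w) i) in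
  V4 (f 0%nat) (f 1%nat) (f 2%nat) (f 3%nat).

(* F_(act A m) = F_m o A for the binary quadratic form F_m(s,t) = m2 s^2 / 2 + m1 s t + m0 t^2,
   so that the GCKV polynomial is f(z) = F_m(z,1). *)
Definition act (A : cmat2) (m : cparam) : cparam :=
  let a := ma A in let b := mb A in let c := mc A in let d := md A in
  CP (/ 2 * m2 m * b * b + m1 m * b * d + m0 m * d * d)
     (m2 m * a * b + m1 m * (a * d + b * c) + 2 * m0 m * c * d)
     (m2 m * a * a + 2 * m1 m * a * c + 2 * m0 m * c * c).

Ltac destruct_coords :=
  repeat match goal with
  | A : cmat2 |- _ => destruct A as [[? ?] [? ?] [? ?] [? ?]]
  | m : cparam |- _ => destruct m as [[? ?] [? ?] [? ?]]
  | w : vec4 |- _ => destruct w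
  end; cbn.

Lemma pscale_1 m : pscale 1 m = m.
Proof. destruct m; unfold pscale; cbn; f_equal; ring. Qed.

Lemma vscale_1 w : vscale 1 w = w.
Proof. destruct w; unfold vscale; cbn; f_equal; ring. Qed.

Lemma oa_vzero A : oa A vzero = vzero.
Proof. unfold oa, OAT_apply, OA, to_cvec, vzero; destruct_coords. f_equal; field. Qed.

Lemma killing_vec_vzero m : killing_vec m vzero = vzero.
Proof. unfold killing_vec, vzero; cbn; f_equal; field. Qed.

Lemma killing_vec_act A m w :
  killing_vec (act A m) (oa A w) = oa A (killing_vec (pscale (mdet A) m) w).
Proof.
  unfold killing_vec, act, oa, OAT_apply, OA, to_cvec, pscale, mdet; destruct_coords.
  f_equal; field.
Qed.

Lemma killing_vec_rotate m u :
  killing_vec (pscale Ci m) (killing_vec m u) = vscale (Im (disc m) / 2) u.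
Proof. unfold killing_vec, pscale, disc, vscale; destruct_coords. f_equal; field. Qed.

Lemma oa_oa_madj A w : oa A (oa (madj A) w) = vscale (Cmod (mdet A) ^ 2) w.
Proof.
  rewrite Cmod2_alt.
  unfold oa, madj, mdet, vscale, OAT_apply, OA, to_cvec; destruct_coords. f_equal; field.
Qed.

Lemma oa_madj_oa A w : oa (madj A) (oa A w) = vscale (Cmod (mdet A) ^ 2) w.
Proof.
  rewrite Cmod2_alt.
  unfold oa, madj, mdet, vscale, OAT_apply, OA, to_cvec; destruct_coords. f_equal; field.
Qed.

Lemma lorentz_sq_oa A w : lorentz_sq (oa A w) = Cmod (mdet A) ^ 2 * lorentz_sq w.
Proof.
  rewrite Cmod2_alt.
  unfold lorentz_sq, oa, mdet, OAT_apply, OA, to_cvec; destruct_coords. field.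
Qed.

Lemma killing_vec_eq0_nonreal m u :
  Im (disc m) <> 0 -> killing_vec m u = vzero -> u = vzero.
Proof.
  intros Hq Hk.
  pose proof (killing_vec_rotate m u) as Hs.
  rewrite Hk, killing_vec_vzero in Hs.
  assert (Hc : Im (disc m) / 2 <> 0) by lra.
  set (c := Im (disc m) / 2) in Hs, Hc; clearbody c.
  destruct u as [u0 u1 u2 u3]; injection Hs as H0 H1 H2 H3.
  unfold vzero; f_equal; apply (Rmult_eq_reg_l c); (lra || exact Hc).
Qed.

(** * Normal form for real q *)

(* F(s,t) = s^2 + (q/4) t^2. *)
Definition normal_param (q : C) : cparam := CP (q / 4) 0 2.
Definition normal_vec (r s1 s2 : R) : vec4 := V4 (s1 * (r / 4 + 1)) (s1 * (r / 4 - 1)) 0 s2.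

Lemma killing_vec_normal_param r w :
  killing_vec (normal_param (RtoC r)) w
  = V4 ((r / 4 - 1) * v2 w) ((r / 4 + 1) * v2 w) (r / 4 * (v0 w - v1 w) - (v0 w + v1 w)) 0.
Proof. unfold killing_vec, normal_param; cbn. f_equal; field. Qed.

Lemma killing_vec_normal_param_eq0 r w :
  killing_vec (normal_param (RtoC r)) w = vzero <-> exists s1 s2, w = normal_vec r s1 s2.
Proof.
  rewrite killing_vec_normal_param. destruct w as [w0 w1 w2 w3]; cbn. split.
  - intro H. injection H as H0 H1 H2.
    assert (w2 = 0) by lra. subst w2.
    exists ((w0 - w1) / 2), w3. unfold normal_vec. f_equal; lra.
  - intros (s1 & s2 & H). injection H as -> -> -> ->. unfold vzero. f_equal; field.
Qed.

Lemma lorentz_sq_normal_vec r s1 s2 : lorentz_sq (normal_vec r s1 s2) = s1 ^ 2 * r - s2 ^ 2.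
Proof. unfold lorentz_sq, normal_vec; cbn [v0 v1 v2 v3]. field. Qed.

Definition frame (m : cparam) (gam del : C) : cmat2 :=
  CM (/ 2 * (del * m2 m - gam * m1 m)) (/ 2 * del * m1 m - gam * m0 m) gam del.
Definition frame_norm (m : cparam) (gam del : C) : C :=
  / 2 * (del * del) * m2 m - gam * del * m1 m + gam * gam * m0 m.

Lemma mdet_frame m gam del : mdet (frame m gam del) = frame_norm m gam del.
Proof. unfold mdet, frame, frame_norm; cbn [ma mb mc md]. field. Qed.

Lemma act_frame_normal_param m gam del :
  act (frame m gam del) (normal_param (disc m)) = pscale (frame_norm m gam del) m.
Proof.
  unfold act, frame, normal_param, disc, frame_norm, pscale; cbn [m0 m1 m2 ma mb mc md].
  f_equal; field.
Qed.

Lemma Cmod_mdet_frame m gam del :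
  frame_norm m gam del = 1 -> Cmod (mdet (frame m gam del)) ^ 2 = 1.
Proof. intro Hn. rewrite mdet_frame, Hn, Cmod_1. ring. Qed.

Lemma killing_vec_frame_eq0 m gam del u :
  frame_norm m gam del = 1 -> Im (disc m) = 0 ->
  killing_vec m u = vzero
  <-> exists s1 s2, u = oa (frame m gam del) (normal_vec (Re (disc m)) s1 s2).
Proof.
  intros Hn Hq.
  pose proof (Cmod_mdet_frame m gam del Hn) as Hdet.
  set (A := frame m gam del) in *.
  set (nu := normal_param (RtoC (Re (disc m)))).
  assert (Hk : forall w, killing_vec m (oa A w) = oa A (killing_vec nu w)).
  { intro w.
    assert (Hm : act A nu = m).
    { unfold A, nu. replace (RtoC (Re (disc m))) with (disc m)
        by (destruct (disc m) as [qr qi]; cbn in *; now subst).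
      rewrite act_frame_normal_param, Hn. apply pscale_1. }
    rewrite <- Hm at 1. rewrite killing_vec_act.
    unfold A; rewrite mdet_frame, Hn, pscale_1. reflexivity. }
  assert (Hu : u = oa A (oa (madj A) u)) by now rewrite oa_oa_madj, Hdet, vscale_1.
  split.
  - intro H0. rewrite Hu, Hk in H0.
    apply (f_equal (oa (madj A))) in H0.
    rewrite oa_madj_oa, Hdet, vscale_1, oa_vzero in H0.
    apply killing_vec_normal_param_eq0 in H0 as (s1 & s2 & Hw).
    exists s1, s2. now rewrite Hu, Hw.
  - intros (s1 & s2 & ->). rewrite Hk.
    replace (killing_vec nu (normal_vec (Re (disc m)) s1 s2)) with vzero
      by (symmetry; apply killing_vec_normal_param_eq0; eauto).
    apply oa_vzero.
Qed.

Lemma OAT_apply_real a b c d w i :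
  OAT_apply a b c d (to_cvec w) i = RtoC (Re (OAT_apply a b c d (to_cvec w) i)).
Proof.
  destruct a, b, c, d, w. apply injective_projections; [reflexivity|].
  destruct i as [|[|[|[|i]]]]; unfold OAT_apply, OA, to_cvec; cbn -[Rinv Rdiv]; field.
Qed.

Lemma OAT_apply_ext a b c d v v' i :
  v 0%nat = v' 0%nat -> v 1%nat = v' 1%nat -> v 2%nat = v' 2%nat -> v 3%nat = v' 3%nat ->
  OAT_apply a b c d v i = OAT_apply a b c d v' i.
Proof. intros E0 E1 E2 E3. unfold OAT_apply. now rewrite E0, E1, E2, E3. Qed.

Lemma oa_spec a b c d w u v :
  (forall j, (j < 4)%nat -> v j = to_cvec w j) ->
  (RtoC (v0 u) = OAT_apply a b c d v 0 /\ RtoC (v1 u) = OAT_apply a b c d v 1 /\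
   RtoC (v2 u) = OAT_apply a b c d v 2 /\ RtoC (v3 u) = OAT_apply a b c d v 3)
  <-> u = oa (CM a b c d) w.
Proof.
  intro Hv.
  rewrite !(OAT_apply_ext a b c d v (to_cvec w)) by (apply Hv; lia).
  rewrite (OAT_apply_real _ _ _ _ w 0), (OAT_apply_real _ _ _ _ w 1),
    (OAT_apply_real _ _ _ _ w 2), (OAT_apply_real _ _ _ _ w 3).
  destruct u; unfold oa; cbn [ma mb mc md]; split.
  - intros (H0 & H1 & H2 & H3).
    apply RtoC_inj in H0, H1, H2, H3. cbn in *. now f_equal.
  - intro H. injection H as -> -> -> ->. now repeat split.
Qed.

Lemma normal_vec_cvec q s1 s2 j : Im q = 0 ->
  match j with
  | 0 => (RtoC s1 * (/ 4 * q + 1))%C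
  | 1 => (RtoC s1 * (/ 4 * q - 1))%C
  | 2 => RtoC 0
  | _ => RtoC s2
  end = to_cvec (normal_vec (Re q) s1 s2) j.
Proof.
  destruct q as [r qi]; cbn; intros ->.
  destruct j as [|[|[|j]]]; unfold to_cvec, normal_vec; cbn [v0 v1 v2 v3]; try reflexivity;
    apply injective_projections; cbn; field.
Qed.

Theorem theorem9p1 (mu0 mu1 mu2 : C) :
  (* xi_{mu} is not identically zero *)
  ~ (forall (k : nat) (x y : R), gckv mu0 mu1 mu2 k x y = 0) ->
  let q := (2 * mu0 * mu2 - mu1 * mu1)%C in
  (* case q not real: U is empty *)
  (Im q <> 0 ->
     forall u0 u1 u2 u3 : R, ~ (u0 = 0 /\ u1 = 0 /\ u2 = 0 /\ u3 = 0) ->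
       ~ is_killing (gckv mu0 mu1 mu2) (g_u u0 u1 u2 u3) (dom_u u0 u1 u2 u3))
  /\
  (* case q real *)
  (Im q = 0 ->
     forall gam del : C,
       (/ 2 * (del * del) * mu2 - gam * del * mu1 + gam * gam * mu0 = 1)%C ->
       let alp := (/ 2 * (del * mu2 - gam * mu1))%C in
       let bet := (/ 2 * del * mu1 - gam * mu0)%C in
       let rep (u0 u1 u2 u3 s1 s2 : R) : Prop :=
         let v (j : nat) : C :=
           match j with
           | 0 => (RtoC s1 * (/ 4 * q + 1))%C
           | 1 => (RtoC s1 * (/ 4 * q - 1))%C
           | 2 => RtoC 0
           | _ => RtoC s2
           end in
         RtoC u0 = OAT_apply alp bet gam del v 0 /\
         RtoC u1 = OAT_apply alp bet gam del v 1 /\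
         RtoC u2 = OAT_apply alp bet gam del v 2 /\
         RtoC u3 = OAT_apply alp bet gam del v 3 in
       forall u0 u1 u2 u3 : R, ~ (u0 = 0 /\ u1 = 0 /\ u2 = 0 /\ u3 = 0) ->
         (is_killing (gckv mu0 mu1 mu2) (g_u u0 u1 u2 u3) (dom_u u0 u1 u2 u3) <->
            exists s1 s2 : R, ~ (s1 = 0 /\ s2 = 0) /\ rep u0 u1 u2 u3 s1 s2)
         /\
         (forall s1 s2 : R, ~ (s1 = 0 /\ s2 = 0) -> rep u0 u1 u2 u3 s1 s2 ->
            forall x y : R, dom_u u0 u1 u2 u3 x y ->
              gauss_curvature (g_u u0 u1 u2 u3) x y = s1 ^ 2 * Re q - s2 ^ 2)).
Proof.
  intros _ q. split.
  - intros Hq u0 u1 u2 u3 Hu HK. apply Hu.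
    apply (is_killing_gckv_g_u _ _ _ _ _ _ _ Hu),
      (killing_vec_eq0_nonreal (CP mu0 mu1 mu2) _ Hq) in HK.
    injection HK as -> -> -> ->. now repeat split.
  - intros Hq gam del Hn alp bet rep u0 u1 u2 u3 Hu.
    assert (Hrep : forall s1 s2, rep u0 u1 u2 u3 s1 s2
                   <-> V4 u0 u1 u2 u3
                       = oa (frame (CP mu0 mu1 mu2) gam del) (normal_vec (Re q) s1 s2)).
    { intros s1 s2. unfold rep; cbv zeta.
      apply (oa_spec alp bet gam del (normal_vec (Re q) s1 s2) (V4 u0 u1 u2 u3)).
      intros j _. now apply normal_vec_cvec. }
    split.
    + rewrite (is_killing_gckv_g_u _ _ _ _ _ _ _ Hu),
        (killing_vec_frame_eq0 (CP mu0 mu1 mu2) gam del _ Hn Hq).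
      split.
      * intros (s1 & s2 & Hs). exists s1, s2. split; [|now apply Hrep].
        intros [-> ->]. apply Hu.
        replace (normal_vec _ 0 0) with vzero in Hs by (unfold normal_vec, vzero; f_equal; field).
        rewrite oa_vzero in Hs. injection Hs as -> -> -> ->. now repeat split.
      * intros (s1 & s2 & _ & Hs). exists s1, s2. now apply Hrep.
    + intros s1 s2 _ Hs x y Hxy. apply Hrep in Hs.
      transitivity (lorentz_sq (V4 u0 u1 u2 u3)).
      { exact (gauss_curvature_g_u (V4 u0 u1 u2 u3) x y Hxy). }
      rewrite Hs, lorentz_sq_oa, Cmod_mdet_frame, lorentz_sq_normal_vec by exact Hn. ring.
Qed.
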